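(* Let $|\cdot|:\mathbb{R}^n\to\mathbb{R}_{\ge0}$ be an orthant-monotonic norm and let $\|\cdot\|$ be the induced matrix norm. Then for every $A=(a_{ij})\in\mathbb{R}^{n\times n}$, $\|A\|\ge\max\{|a_{11}|,\dots,|a_{nn}|\}$ (absolute values of the diagonal entries).
   Context: The induced matrix norm is $\|A\|=\max_{|x|=1}|Ax|$. A norm $|\cdot|$ on $\mathbb{R}^n$ is orthant-monotonic if for all $x,y\in\mathbb{R}^n$: whenever $x_iy_i\ge 0$ and $|x_i|\le|y_i|$ for all $i$, then $|x|\le|y|$. *)

From HB Require Import structures.
From mathcomp Require Import all_boot all_order all_algebra.
From mathcomp Require Import boolp classical_sets reals.
Set Implicit Arguments. Unset Strict Implicit. Unset Printing Implicit Defensive.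
Import Order.TTheory GRing.Theory Num.Theory.
Local Open Scope classical_set_scope.
Local Open Scope ring_scope.

Definition is_norm (R : realType) (n : nat) (N : 'cV[R]_n -> R) : Prop :=
  [/\ forall x, 0 <= N x,
      forall x, N x = 0 -> x = 0,
      forall (a : R) x, N (a *: x) = `|a| * N x
    & forall x y, N (x + y) <= N x + N y].

Definition orthant_monotonic (R : realType) (n : nat) (N : 'cV[R]_n -> R) : Prop :=
  forall x y : 'cV[R]_n,
    (forall i : 'I_n, 0 <= x i 0 * y i 0 /\ `|x i 0| <= `|y i 0|) -> N x <= N y.

(* Induced matrix norm ||A|| = max_{N x = 1} N (A x) (taken as a supremum; the
   max is attained by compactness). *)
Definition induced_norm (R : realType) (n : nat) (N : 'cV[R]_n -> R)
  (A : 'M[R]_n) : R :=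
  reals.sup [set N (A *m x) | x in [set x : 'cV[R]_n | N x = 1]].

(* Orthant monotonicity gives |x_i| N(e_i) <= N x for every coordinate i.
   Applied to x = A u with u = e_i / N(e_i), a unit vector whose image has
   i-th coordinate a_ii / N(e_i), this yields |a_ii| <= N(A u) <= ||A||.
   The same coordinate bound shows N(A x) <= sum_j N(A e_j) / N(e_j) on the
   unit sphere, so the supremum defining ||A|| is that of a bounded set. *)
From HB Require Import structures.
From mathcomp Require Import all_boot all_order all_algebra.
From mathcomp Require Import boolp classical_sets reals.
Import Order.TTheory GRing.Theory Num.Theory.
Local Open Scope ring_scope.

Section OrthantMonotonicNorm.
Variables (R : realType) (n : nat) (N : 'cV[R]_n -> R).
Hypotheses (hN : is_norm N) (hom : orthant_monotonic N).

Let e (i : 'I_n) : 'cV[R]_n := delta_mx i 0.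

Lemma norm_ge0 (x : 'cV[R]_n) : 0 <= N x.
Proof. by case: hN. Qed.

Lemma normZ (a : R) (x : 'cV[R]_n) : N (a *: x) = `|a| * N x.
Proof. by case: hN. Qed.

Lemma norm0 : N 0 = 0.
Proof. by rewrite -(scale0r (0 : 'cV[R]_n)) normZ normr0 mul0r. Qed.

Lemma norm_sum (I : Type) (r : seq I) (F : I -> 'cV[R]_n) :
  N (\sum_(i <- r) F i) <= \sum_(i <- r) N (F i).
Proof.
case: hN => _ _ _ normD.
elim/big_rec2: _ => [|i y1 y2 _ IH]; first by rewrite norm0.
exact: le_trans (normD _ _) (lerD (lexx _) IH).
Qed.

Lemma norm_delta_gt0 i : 0 < N (e i).
Proof.
case: hN => _ norm_eq0 _ _; rewrite lt_def norm_ge0 andbT.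
apply/eqP => /norm_eq0 /matrixP /(_ i 0).
by rewrite /e !mxE !eqxx /= => /eqP; rewrite oner_eq0.
Qed.

(* [x i 0 *: e i] lies in the orthant of [x] and is dominated by it coordinatewise. *)
Lemma norm_coord_le (x : 'cV[R]_n) i : `|x i 0| * N (e i) <= N x.
Proof.
rewrite -normZ; apply: hom => k; rewrite !mxE.
have [<-|_] /= := eqVneq i k; last by rewrite mulr0 mul0r normr0.
by rewrite mulr1 -expr2 sqr_ge0.
Qed.

Definition unit_delta i : 'cV[R]_n := (N (e i))^-1 *: e i.

Lemma norm_unit_delta i : N (unit_delta i) = 1.
Proof.
have Ne_gt0 := norm_delta_gt0 i.
by rewrite normZ ger0_norm ?invr_ge0 ?(ltW Ne_gt0) // mulVf ?gt_eqF.
Qed.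

Section InducedNorm.
Variable A : 'M[R]_n.

Lemma norm_mulmx_le (x : 'cV[R]_n) : N x = 1 ->
  N (A *m x) <= \sum_(j < n) N (A *m e j) / N (e j).
Proof.
move=> Nx1; rewrite {1}(matrix_sum_delta x) mulmx_sumr.
apply: le_trans; first exact: norm_sum.
apply: ler_sum => j _.
have Ne_gt0 := norm_delta_gt0 j.
rewrite big_ord1 -scalemxAr normZ mulrC ler_wpM2l ?norm_ge0 //.
by rewrite -[_^-1]mul1r ler_pdivlMr // -Nx1 norm_coord_le.
Qed.

Lemma le_induced_norm (x : 'cV[R]_n) : N x = 1 -> N (A *m x) <= induced_norm N A.
Proof.
move=> Nx1; apply: ub_le_sup; last by exists x.
exists (\sum_(j < n) N (A *m e j) / N (e j)).
by move=> _ [y /= Ny1 <-]; exact: norm_mulmx_le.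
Qed.

Lemma diag_le_induced_norm i : `|A i i| <= induced_norm N A.
Proof.
have Ne_gt0 := norm_delta_gt0 i.
apply: (le_trans _ (le_induced_norm _ (norm_unit_delta i))).
have := norm_coord_le (A *m unit_delta i) i.
rewrite /unit_delta -scalemxAr -colE !mxE normrM.
rewrite ger0_norm ?invr_ge0 ?(ltW Ne_gt0) //.
by rewrite mulrAC mulVf ?gt_eqF // mul1r.
Qed.

Lemma induced_norm_ge0 : 0 <= induced_norm N A.
Proof.
have [[x Nx1]|no_unit] := pselect (exists x : 'cV[R]_n, N x = 1).
  exact: le_trans (norm_ge0 _) (le_induced_norm _ Nx1).
(* Only possible for n = 0; then the sup is taken over the empty set, which is 0. *)
rewrite /induced_norm; set S := (X in reals.sup X).
suff -> : S = set0 by rewrite sup0.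
by apply/seteqP; split => // _ [x /= Nx1 _]; apply: no_unit; exists x.
Qed.

End InducedNorm.
End OrthantMonotonicNorm.

Theorem lemma1 (R : realType) (n : nat) (N : 'cV[R]_n -> R)
  (hN : is_norm N) (hom : orthant_monotonic N) (A : 'M[R]_n) :
  \big[Num.max/0]_(i < n) `|A i i| <= induced_norm N A.
Proof.
apply: bigmax_le => [|i _]; first exact: induced_norm_ge0.
exact: diag_le_induced_norm.
Qed.
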